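(* Let $\mathfrak g$ be a complex Lie algebra with bracket $[\ ,\ ]$, let $\tilde{\mathfrak g}=\mathfrak g\oplus\mathbb C$, and for $\lambda\in\mathbb C$ let $\mathfrak R(\lambda):\tilde{\mathfrak g}\otimes\tilde{\mathfrak g}\to\tilde{\mathfrak g}\otimes\tilde{\mathfrak g}$ be $\mathfrak R(\lambda)\big((x+\alpha)\otimes(y+\beta)\big)=(y+\beta)\otimes(x+\alpha)+[x,y]\otimes\lambda$ ($x,y\in\mathfrak g$, $\alpha,\beta\in\mathbb C$). Let $V$ be a complex vector space and $A:\mathfrak g\otimes V\to V$ a linear map, and define $\mathfrak R_V(\lambda):\tilde{\mathfrak g}\otimes V\to V\otimes\tilde{\mathfrak g}$ by $\mathfrak R_V(\lambda)\big((x+\alpha)\otimes v\big)=v\otimes(x+\alpha)+A(x,v)\otimes\lambda$ ($x\in\mathfrak g$, $v\in V$, $\alpha\in\mathbb C$). Then the equality of maps $\tilde{\mathfrak g}\otimes\tilde{\mathfrak g}\otimes V\to V\otimes\tilde{\mathfrak g}\otimes\tilde{\mathfrak g}$ $$(\mathfrak R_V(\lambda)\otimes 1_{\tilde{\mathfrak g}})\circ(1_{\tilde{\mathfrak g}}\otimes\mathfrak R_V(\lambda))\circ(\mathfrak R(\lambda)\otimes 1_V)=(1_V\otimes\mathfrak R(\lambda))\circ(\mathfrak R_V(\lambda)\otimes 1_{\tilde{\mathfrak g}})\circ(1_{\tilde{\mathfrak g}}\otimes\mathfrak R_V(\lambda))$$ holds for every $\lambda\in\mathbb C$ if and only if $A$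 is a $\mathfrak g$-action on $V$, i.e. $A([x,y],v)=A(x,A(y,v))-A(y,A(x,v))$ for all $x,y\in\mathfrak g$, $v\in V$.
   Context: All tensor products are over $\mathbb C$; $\lambda$, $[x,y]$ are regarded as elements of $\tilde{\mathfrak g}=\mathfrak g\oplus\mathbb C$ via the obvious inclusions. *)

From HB Require Import structures.
From mathcomp Require Import all_boot all_order all_algebra.
From mathcomp Require Import complex.
From mathcomp Require Import Rstruct.
Set Implicit Arguments. Unset Strict Implicit. Unset Printing Implicit Defensive.
Import Order.TTheory GRing.Theory Num.Theory.
Local Open Scope ring_scope.

Notation CC := (complex Rdefinitions.R).

Definition is_lie_bracket (g : lmodType CC) (br : g -> g -> g) : Prop :=
  [/\ (forall (c : CC) x x' y, br (c *: x + x') y = c *: br x y + br x' y),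
      (forall (c : CC) x y y', br x (c *: y + y') = c *: br x y + br x y'),
      (forall x, br x x = 0) &
      (forall x y z, br x (br y z) + br y (br z x) + br z (br x y) = 0)].

(* A linear map g (x) V -> V, i.e. a bilinear map g -> V -> V. *)
Definition bilinear_map (g V : lmodType CC) (A : g -> V -> V) : Prop :=
  (forall (c : CC) x x' v, A (c *: x + x') v = c *: A x v + A x' v) /\
  (forall (c : CC) x v v', A x (c *: v + v') = c *: A x v + A x v').

Definition is_g_action (g V : lmodType CC) (br : g -> g -> g) (A : g -> V -> V) : Prop :=
  forall x y v, A (br x y) v = A x (A y v) - A y (A x v).

Definition gtilde (g : lmodType CC) : lmodType CC := (g * CC^o)%type.

(* ---------- Triple tensor products X (x) Y (x) Z over C ----------
   An element is represented by a formal sum of pure tensors x (x) y (x) z,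
   i.e. a list of triples.  Two formal sums represent the same tensor iff
   every trilinear map into every C-vector space takes the same value on them
   (universal property of the tensor product). *)
Definition tens3 (X Y Z : Type) := seq (X * Y * Z).

Definition trilinear (X Y Z U : lmodType CC) (f : X -> Y -> Z -> U) : Prop :=
  [/\ (forall (c : CC) x x' y z, f (c *: x + x') y z = c *: f x y z + f x' y z),
      (forall (c : CC) x y y' z, f x (c *: y + y') z = c *: f x y z + f x y' z) &
      (forall (c : CC) x y z z', f x y (c *: z + z') = c *: f x y z + f x y z')].

Definition tens3_eq (X Y Z : lmodType CC) (s t : tens3 X Y Z) : Prop :=
  forall (U : lmodType CC) (f : X -> Y -> Z -> U), trilinear f ->
    \sum_(p <- s) f p.1.1 p.1.2 p.2 = \sum_(p <- t) f p.1.1 p.1.2 p.2.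

(* Extension by linearity of a map given on pure tensors. *)
Definition tlift (X Y Z X' Y' Z' : Type) (f : X -> Y -> Z -> tens3 X' Y' Z')
  (s : tens3 X Y Z) : tens3 X' Y' Z' :=
  flatten [seq f p.1.1 p.1.2 p.2 | p <- s].

Section Maps.
Variables (g V : lmodType CC) (br : g -> g -> g) (A : g -> V -> V).

(* Values of R(lambda) and R_V(lambda) on pure tensors, as formal sums
   (lists of pairs) of pure tensors. *)
Definition Rl (l : CC) (a b : gtilde g) : seq (gtilde g * gtilde g) :=
  [:: (b, a); ((br a.1 b.1, 0) : gtilde g, (0, l) : gtilde g)].

Definition RVl (l : CC) (a : gtilde g) (v : V) : seq (V * gtilde g) :=
  [:: (v, a); (A a.1 v, (0, l) : gtilde g)].

Definition R_x_1V (l : CC) :=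
  tlift (fun (a b : gtilde g) (v : V) => [seq (p.1, p.2, v) | p <- Rl l a b]).
Definition one_x_RV_1 (l : CC) :=
  tlift (fun (a b : gtilde g) (v : V) => [seq (a, p.1, p.2) | p <- RVl l b v]).
Definition RV_x_1 (l : CC) :=
  tlift (fun (a : gtilde g) (v : V) (b : gtilde g) => [seq (p.1, p.2, b) | p <- RVl l a v]).
Definition oneV_x_R (l : CC) :=
  tlift (fun (v : V) (a b : gtilde g) => [seq (v, p.1, p.2) | p <- Rl l a b]).

End Maps.

(* Evaluate both sides on a pure tensor (x + α) ⊗ (y + β) ⊗ v.  Expanding the
   three factors produces the same terms on both sides except for the
   components along V ⊗ λ ⊗ λ, which differ by D(x, y, v) ⊗ λ ⊗ λ with
   D(x, y, v) = A(y, A(x, v)) + A([x, y], v) - A(x, A(y, v)).  Hence the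
   identity holds when A is an action (D = 0).  Conversely, the trilinear
   map w ⊗ a ⊗ b ↦ a_C b_C w, which reads off the V ⊗ C ⊗ C component, sends
   the difference of the two sides at λ = 1 to D(x, y, v), so D = 0. *)
From HB Require Import structures.
From mathcomp Require Import all_boot all_order all_algebra.
From mathcomp Require Import complex Rstruct ssrAC.
Set Implicit Arguments. Unset Strict Implicit. Unset Printing Implicit Defensive.
Import GRing.Theory.
Local Open Scope ring_scope.

Lemma big_tlift (X Y Z X' Y' Z' : Type) (U : nmodType)
    (F : X -> Y -> Z -> tens3 X' Y' Z') (h : X' * Y' * Z' -> U) (s : tens3 X Y Z) :
  \sum_(p <- tlift F s) h p = \sum_(q <- s) \sum_(p <- F q.1.1 q.1.2 q.2) h p.
Proof. by rewrite big_flatten /= big_map. Qed.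

Section LinearFun.
Variables (U W : lmodType CC) (f : U -> W).
Hypothesis f_lin : linear f.
HB.instance Definition _ := GRing.isLinear.Build CC U W *:%R f f_lin.

Lemma linear_fun0 : f 0 = 0. Proof. exact: linear0. Qed.
Lemma linear_funD x y : f (x + y) = f x + f y. Proof. exact: linearD. Qed.
Lemma linear_funB x y : f (x - y) = f x - f y. Proof. exact: linearB. Qed.

End LinearFun.

Section YangBaxterDefect.
Variables (g V : lmodType CC) (br : g -> g -> g) (A : g -> V -> V).
Hypotheses (br_linl : forall y, linear (br^~ y)) (br_linr : forall x, linear (br x)).
Hypotheses (A_linl : forall v, linear (A^~ v)) (A_linr : forall x, linear (A x)).

Definition action_defect (x y : g) (v : V) : V :=
  A y (A x v) + A (br x y) v - A x (A y v).

Lemma g_actionP : is_g_action br A <-> forall x y v, action_defect x y v = 0.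
Proof.
have defect0E x y v :
    (action_defect x y v == 0) = (A (br x y) v == A x (A y v) - A y (A x v)).
  by rewrite -[RHS]subr_eq0 opprB addrCA addrA.
by split=> act x y v; apply/eqP; [rewrite defect0E | rewrite -defect0E]; exact/eqP/act.
Qed.

Lemma yang_baxter_defect (l : CC) (s : tens3 (gtilde g) (gtilde g) V)
    (U : lmodType CC) (f : V -> gtilde g -> gtilde g -> U) : trilinear f ->
  \sum_(p <- RV_x_1 A l (one_x_RV_1 A l (R_x_1V br l s))) f p.1.1 p.1.2 p.2 =
  \sum_(p <- oneV_x_R br l (RV_x_1 A l (one_x_RV_1 A l s))) f p.1.1 p.1.2 p.2
  + \sum_(t <- s) f (action_defect t.1.1.1 t.1.2.1 t.2) (0, l) (0, l).
Proof.
move=> [f_linl f_linm _].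
have f0l b c : f 0 b c = 0 := linear_fun0 (fun k u u' => f_linl k u u' b c).
have f0m a c : f a (0, 0) c = 0 := linear_fun0 (fun k u u' => f_linm k a u u' c).
have br0l y : br 0 y = 0 := linear_fun0 (br_linl y).
have br0r x : br x 0 = 0 := linear_fun0 (br_linr x).
have A0l v : A 0 v = 0 := linear_fun0 (A_linl v).
have A0r x : A x 0 = 0 := linear_fun0 (A_linr x).
rewrite !big_tlift -big_split; apply: eq_bigr => [[[[x al] [y be]] v]] _ /=.
rewrite !big_cons !big_nil /= A0l A0r !br0l !br0r !f0l !f0m !addr0 /action_defect.
rewrite (linear_funB (fun k u u' => f_linl k u u' _ _)).
rewrite (linear_funD (fun k u u' => f_linl k u u' _ _)).
by rewrite !addrA [RHS](@GRing.add U).[ACl (1*2*3*4*6*7*5*8)] addrK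
  [LHS](@GRing.add U).[ACl (1*5*3*2*4*6)].
Qed.

Definition scale_scalar_parts (w : V) (a b : gtilde g) : V := (a.2 * b.2) *: w.

Lemma scale_scalar_parts_trilinear : trilinear scale_scalar_parts.
Proof.
rewrite /scale_scalar_parts; split=> c x x' y z /=.
- by rewrite scalerDr !scalerA mulrC.
- by rewrite -[c *: x'.2]/(c * x'.2) mulrDl scalerDl -mulrA -scalerA.
- by rewrite -[c *: y.2]/(c * y.2) mulrDr scalerDl scalerA mulrCA.
Qed.

Lemma yang_baxter_of_action l s : is_g_action br A ->
  tens3_eq (RV_x_1 A l (one_x_RV_1 A l (R_x_1V br l s)))
           (oneV_x_R br l (RV_x_1 A l (one_x_RV_1 A l s))).
Proof.
move=> /g_actionP act U f f_tri; rewrite yang_baxter_defect // -[RHS]addr0; congr (_ + _).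
apply: big1 => t _; case: f_tri => f_linl _ _.
by rewrite act (linear_fun0 (fun k u u' => f_linl k u u' _ _)).
Qed.

Lemma action_of_yang_baxter :
  (forall l s, tens3_eq (RV_x_1 A l (one_x_RV_1 A l (R_x_1V br l s)))
                        (oneV_x_R br l (RV_x_1 A l (one_x_RV_1 A l s)))) ->
  is_g_action br A.
Proof.
move=> yb; apply/g_actionP => x y v.
have := yang_baxter_defect 1 [:: ((x, 0), (y, 0), v)] scale_scalar_parts_trilinear.
rewrite (yb _ _ _ _ scale_scalar_parts_trilinear) => /(etrans (addr0 _)) /addrI.
by rewrite big_seq1 /scale_scalar_parts /= mulr1 scale1r.
Qed.

End YangBaxterDefect.

Theorem lemma1p2p1 (g : lmodType CC) (br : g -> g -> g) (V : lmodType CC)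
  (A : g -> V -> V) :
  is_lie_bracket br -> bilinear_map A ->
  ((forall (l : CC) (s : tens3 (gtilde g) (gtilde g) V),
      tens3_eq
        (RV_x_1 A l (one_x_RV_1 A l (R_x_1V br l s)))
        (oneV_x_R br l (RV_x_1 A l (one_x_RV_1 A l s))))
   <-> is_g_action br A).
Proof.
move=> [br_linl br_linr _ _] [A_linl A_linr].
have br_lin1 y : linear (br^~ y) := fun c x x' => br_linl c x x' y.
have br_lin2 x : linear (br x) := fun c y y' => br_linr c x y y'.
have A_lin1 v : linear (A^~ v) := fun c x x' => A_linl c x x' v.
have A_lin2 x : linear (A x) := fun c v v' => A_linr c x v v'.
split; first exact: action_of_yang_baxter br_lin1 br_lin2 A_lin1 A_lin2.
by move=> act l s; exact: yang_baxter_of_action br_lin1 br_lin2 A_lin1 A_lin2 l s act.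
Qed.
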